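(* Let $g_y(\omega)=\frac{\sigma_\epsilon^2}{2\pi}|\kappa(e^{i\omega})|^2$ be the spectral density of an invertible ARMA process, i.e. $\sigma_\epsilon^2>0$ and $\kappa(z)=\eta(z)/\phi(z)$ where $\eta,\phi$ are polynomials with no common zeros, all of whose zeros lie in $\{|z|>1\}$, normalized so that $\kappa(0)=1$. For $\beta\in[0,1]$ and $\theta\in(-1,1)$ let $$f(\theta,\beta)=-\int_{-\pi}^{\pi}\frac{e^{i\omega}+\beta\theta}{|(1+\theta e^{i\omega})(1+\beta\theta e^{i\omega})|^2}\,g_y(\omega)\,d\omega .$$ Then for each $\beta\in[0,1]$ the set $\Theta_0^\beta=\{\theta\in(-1,1): f(\theta,\beta)=0\}$ is finite. *)

From Stdlib Require Export Reals List.
From Coquelicot Require Export Coquelicot.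
Open Scope R_scope.

(* A polynomial with real coefficients, given by its coefficient list
   [c0; c1; ...; cn] (meaning c0 + c1 z + ... + cn z^n), evaluated at a complex point. *)
Fixpoint peval (p : list R) (z : C) : C :=
  match p with
  | nil => RtoC 0
  | a :: q => Cplus (RtoC a) (Cmult z (peval q z))
  end.

Definition eiw (w : R) : C := (cos w, sin w).

Definition kappa (eta phi : list R) (z : C) : C := Cdiv (peval eta z) (peval phi z).

Definition invertible_ARMA (eta phi : list R) : Prop :=
  (forall z : C, peval eta z = RtoC 0 -> Cmod z > 1) /\
  (forall z : C, peval phi z = RtoC 0 -> Cmod z > 1) /\
  (forall z : C, ~ (peval eta z = RtoC 0 /\ peval phi z = RtoC 0)) /\
  kappa eta phi (RtoC 0) = RtoC 1.

Definition spec_dens (sigma2 : R) (eta phi : list R) (w : R) : R :=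
  sigma2 / (2 * PI) * (Cmod (kappa eta phi (eiw w))) ^ 2.

Definition f_tb (sigma2 : R) (eta phi : list R) (theta beta : R) : C :=
  Copp (RInt (V := C_R_CompleteNormedModule)
    (fun w : R =>
       Cmult
         (Cdiv (Cplus (eiw w) (RtoC (beta * theta)))
               (RtoC ((Cmod (Cmult (Cplus (RtoC 1) (Cmult (RtoC theta) (eiw w)))
                                   (Cplus (RtoC 1) (Cmult (RtoC (beta * theta)) (eiw w))))) ^ 2)))
         (RtoC (spec_dens sigma2 eta phi w)))
    (- PI) PI).

(* Let [γ = autocov] be the autocovariances of [g] and [psi x = (1/2π) ∫ g(w) P_x(w) dw] its
   transform against the kernel [P_x(w) = (1 + x cos w) / |1 + x e^{iw}|^2 = Σ_n (-x)^n cos (n w)],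
   so that [psi x = Σ_n γ(n) (-x)^n] for [|x| < 1].  Since [g |φ(e^{iw})|^2] is a trigonometric
   polynomial, the filtered sequence [Σ_l φ_l γ(n - l)] eventually satisfies the linear
   recurrence with characteristic polynomial [φ]; it is bounded and [φ] has no root in the
   closed unit disc, so it eventually vanishes.  Hence [φ(-x) psi x] is a polynomial and [psi]
   is rational on (-1, 1).
   For [β < 1], a partial-fraction decomposition of the integrand expresses [f(θ, β)] through
   [psi θ], [psi (βθ)] and [γ(0)]; for [β = 1], [f(θ, 1)] is a multiple of the derivative of the
   rational function [θ ↦ ∫ g / |1 + θ e^{iw}|^2].  Either way the zeros of [f(·, β)] are roots
   of a polynomial that does not vanish at [θ = 1]: there it is a nonzero multiple of the limit
   of [φ(-x) (2 psi x - γ(0))] as [x → 1], and positivity of the Poisson kernel [2 P_x - 1]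
   gives [2 psi x - γ(0) >= min g > 0] on (0, 1). *)

From Stdlib Require Import Reals List Lra Lia Classical.
From Coquelicot Require Import Coquelicot.
From mathcomp Require all_boot all_algebra Rstruct complex.
Open Scope R_scope.

(** * Polynomial functions *)

Fixpoint rpeval (p : list R) (x : R) : R :=
  match p with nil => 0 | a :: q => a + x * rpeval q x end.

Lemma peval_RtoC p x : peval p (RtoC x) = RtoC (rpeval p x).
Proof.
induction p as [|a p IH]; simpl; auto. rewrite IH.
unfold Cplus, Cmult, RtoC; simpl. f_equal; ring.
Qed.

Fixpoint padd (p q : list R) : list R :=
  match p, q with
  | nil, _ => q
  | _, nil => p
  | a :: p', b :: q' => (a + b) :: padd p' q'
  end.

Lemma rpeval_padd p q x : rpeval (padd p q) x = rpeval p x + rpeval q x.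
Proof.
revert q; induction p as [|a p IH]; intros [|b q]; simpl; try ring.
rewrite IH. ring.
Qed.

Definition pscale (c : R) (p : list R) : list R := map (Rmult c) p.

Lemma rpeval_pscale c p x : rpeval (pscale c p) x = c * rpeval p x.
Proof. induction p as [|a p IH]; simpl; [ring|]. rewrite IH. ring. Qed.

Fixpoint pmul (p q : list R) : list R :=
  match p with nil => nil | a :: p' => padd (pscale a q) (0 :: pmul p' q) end.

Lemma rpeval_pmul p q x : rpeval (pmul p q) x = rpeval p x * rpeval q x.
Proof.
induction p as [|a p IH]; simpl; [ring|].
rewrite rpeval_padd, rpeval_pscale. simpl. rewrite IH. ring.
Qed.

Fixpoint pderiv (p : list R) : list R :=
  match p with nil => nil | _ :: q => padd q (0 :: pderiv q) end.

Lemma is_derive_rpeval p x : is_derive (rpeval p) x (rpeval (pderiv p) x).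
Proof.
apply is_derive_Reals. induction p as [|a q IH]; simpl.
- apply derivable_pt_lim_const.
- rewrite rpeval_padd. simpl.
  replace (rpeval q x + (0 + x * rpeval (pderiv q) x))
    with (0 + (1 * rpeval q x + x * rpeval (pderiv q) x)) by ring.
  apply (derivable_pt_lim_plus (fun _ => a)); [apply derivable_pt_lim_const|].
  apply (derivable_pt_lim_mult (fun t => t)); [apply derivable_pt_lim_id | exact IH].
Qed.

Fixpoint pdiv_root (r : R) (p : list R) : list R :=
  match p with
  | nil => nil
  | _ :: q => match q with nil => nil | _ => rpeval q r :: pdiv_root r q end
  end.

Lemma length_pdiv_root r p : length (pdiv_root r p) = pred (length p).
Proof. induction p as [|a [|b q] IH]; simpl in *; auto. Qed.

Lemma rpeval_pdiv_root r p x : rpeval p x = (x - r) * rpeval (pdiv_root r p) x + rpeval p r.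
Proof.
induction p as [|a [|b q] IH]; simpl in *; try ring.
rewrite IH. ring.
Qed.

Lemma rpeval_roots_finite p x0 : rpeval p x0 <> 0 ->
  exists l, forall x, rpeval p x = 0 -> In x l.
Proof.
remember (length p) as n eqn:Hn. revert p Hn.
induction n as [|n IH]; intros p Hn Hx0.
- destruct p; [elim Hx0; reflexivity | discriminate].
- destruct (classic (exists r, rpeval p r = 0)) as [[r Hr]|Hnone].
  + destruct (IH (pdiv_root r p)) as [l Hl].
    * rewrite length_pdiv_root, <- Hn. reflexivity.
    * intros E. apply Hx0. rewrite (rpeval_pdiv_root r p x0), E, Hr. ring.
    * exists (r :: l). intros x Hx. rewrite (rpeval_pdiv_root r p x), Hr, Rplus_0_r in Hx.
      apply Rmult_integral in Hx as [Hx|Hx]; [left; lra | right; auto].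
  + exists nil. intros x Hx. apply Hnone. exists x; exact Hx.
Qed.

Definition is_poly_fun (f : R -> R) : Prop := exists p, forall x, f x = rpeval p x.

Lemma is_poly_fun_ext f g : (forall x, f x = g x) -> is_poly_fun f -> is_poly_fun g.
Proof. intros E [p Hp]. exists p. intros x. rewrite <- E. auto. Qed.

Lemma is_poly_fun_const c : is_poly_fun (fun _ => c).
Proof. exists (c :: nil). intros; simpl; ring. Qed.

Lemma is_poly_fun_id : is_poly_fun (fun x => x).
Proof. exists (0 :: 1 :: nil). intros; simpl; ring. Qed.

Lemma is_poly_fun_plus f g : is_poly_fun f -> is_poly_fun g -> is_poly_fun (fun x => f x + g x).
Proof. intros [p Hp] [q Hq]. exists (padd p q). intros x. rewrite rpeval_padd, Hp, Hq. auto. Qed.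

Lemma is_poly_fun_mult f g : is_poly_fun f -> is_poly_fun g -> is_poly_fun (fun x => f x * g x).
Proof. intros [p Hp] [q Hq]. exists (pmul p q). intros x. rewrite rpeval_pmul, Hp, Hq. auto. Qed.

Lemma is_poly_fun_opp f : is_poly_fun f -> is_poly_fun (fun x => - f x).
Proof.
intros Hf. apply is_poly_fun_ext with (fun x => (-1) * f x); [intros; ring|].
apply is_poly_fun_mult; auto using is_poly_fun_const.
Qed.

Lemma is_poly_fun_minus f g : is_poly_fun f -> is_poly_fun g -> is_poly_fun (fun x => f x - g x).
Proof. intros Hf Hg. apply is_poly_fun_plus, is_poly_fun_opp; auto. Qed.

Lemma is_poly_fun_pow f n : is_poly_fun f -> is_poly_fun (fun x => f x ^ n).
Proof.
intros Hf. induction n as [|n IH]; simpl; [apply is_poly_fun_const|].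
apply is_poly_fun_mult; auto.
Qed.

Lemma is_poly_fun_rpeval_comp p f : is_poly_fun f -> is_poly_fun (fun x => rpeval p (f x)).
Proof.
intros Hf. induction p as [|a p IH]; simpl.
- apply is_poly_fun_const.
- apply is_poly_fun_plus, is_poly_fun_mult; auto using is_poly_fun_const.
Qed.

Lemma is_poly_fun_comp f h : is_poly_fun f -> is_poly_fun h -> is_poly_fun (fun x => f (h x)).
Proof.
intros [p Hp] Hh. apply is_poly_fun_ext with (fun x => rpeval p (h x)); [intros; auto|].
apply is_poly_fun_rpeval_comp. exact Hh.
Qed.

Ltac poly_fun_tac :=
  repeat match goal with
  | |- is_poly_fun (fun _ => ?c) => apply is_poly_fun_const
  | |- is_poly_fun (fun x => x) => apply is_poly_fun_id
  | |- is_poly_fun (fun x => @?f x + @?g x) => apply (is_poly_fun_plus f g)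
  | |- is_poly_fun (fun x => @?f x - @?g x) => apply (is_poly_fun_minus f g)
  | |- is_poly_fun (fun x => @?f x * @?g x) => apply (is_poly_fun_mult f g)
  | |- is_poly_fun (fun x => @?f x ^ ?n) => apply (is_poly_fun_pow f n)
  | |- is_poly_fun (fun x => rpeval ?p (@?f x)) => apply (is_poly_fun_rpeval_comp p f)
  | |- is_poly_fun (fun x => - @?f x) => apply (is_poly_fun_opp f)
  | |- is_poly_fun (fun x => ?F (@?h x)) => apply (is_poly_fun_comp F h)
  end; auto.

Lemma is_poly_fun_derive f : is_poly_fun f ->
  exists f', is_poly_fun f' /\ forall x, is_derive f x (f' x).
Proof.
intros [p Hp]. exists (rpeval (pderiv p)). split; [exists (pderiv p); auto|].
intros x. apply is_derive_ext with (rpeval p); [intros; auto | apply is_derive_rpeval].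
Qed.

Lemma is_poly_fun_continuity_pt f x : is_poly_fun f -> continuity_pt f x.
Proof.
intros [p Hp]. apply continuity_pt_ext with (rpeval p); [intros; auto|].
apply derivable_continuous_pt. exists (rpeval (pderiv p) x).
apply is_derive_Reals, is_derive_rpeval.
Qed.

Lemma is_poly_fun_roots_finite f x0 : is_poly_fun f -> f x0 <> 0 ->
  exists l, forall x, f x = 0 -> In x l.
Proof.
intros [p Hp] Hx0. rewrite Hp in Hx0. destruct (rpeval_roots_finite p x0 Hx0) as [l Hl].
exists l. intros x Hx. apply Hl. rewrite <- Hp. auto.
Qed.

(** * Bounded solutions of linear recurrences *)

Fixpoint cpeval (p : list C) (z : C) : C :=
  match p with nil => RtoC 0 | a :: q => Cplus a (Cmult z (cpeval q z)) end.

Lemma cpeval_map_RtoC p z : cpeval (map RtoC p) z = peval p z.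
Proof. induction p as [|a q IH]; simpl; auto. rewrite IH. auto. Qed.

Module FTA.
Import all_boot all_algebra Rstruct complex.
Import GRing.Theory.
Local Open Scope ring_scope.

Definition toc (c : C) : R[i] := Complex (fst c) (snd c).
Definition ofc (c : R[i]) : C := (complex.Re c, complex.Im c).

Lemma ofcK x : toc (ofc x) = x. Proof. by case: x. Qed.
Lemma tocK x : ofc (toc x) = x. Proof. by case: x. Qed.

Lemma horner_toc (l : list C) z : (Poly (map toc l)).[toc z] = toc (cpeval l z).
Proof.
elim: l => [|a l IH] /=; first by rewrite horner0.
by rewrite horner_cons IH addrC mulrC; case: a; case: (z * _)%C.
Qed.

Lemma nth_toc (l : list C) k : List.nth k l (RtoC 0) = ofc (seq.nth 0 (map toc l) k).
Proof. elim: l k => [|a l IH] [|k] //=. by rewrite tocK. Qed.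

Lemma cpeval_root_or_const (l : list C) :
  (exists z, cpeval l z = RtoC 0) \/ (forall k, List.nth (S k) l (RtoC 0) = RtoC 0).
Proof.
have [Hsize|Hsize] := boolP (size (Poly (map toc l)) <= 1)%N.
- right => k.
  have : (Poly (map toc l))`_k.+1 = 0 by apply: nth_default; exact: leq_trans Hsize _.
  by rewrite coef_Poly nth_toc => ->.
- left; have : size (Poly (map toc l)) != 1%N by apply: contra Hsize => /eqP ->.
  move=> /closed_rootP [x /rootP Hx]; exists (ofc x).
  by rewrite -(tocK (cpeval l (ofc x))) -horner_toc ofcK Hx.
Qed.
End FTA.

Fixpoint clin_comb (p : list C) (u : nat -> C) (n : nat) : C :=
  match p with nil => RtoC 0 | a :: q => Cplus (Cmult a (u n)) (clin_comb q u (S n)) end.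

Fixpoint cpdiv_root (r : C) (p : list C) : list C :=
  match p with
  | nil => nil
  | _ :: q => match q with nil => nil | _ => cpeval q r :: cpdiv_root r q end
  end.

Lemma length_cpdiv_root r p : length (cpdiv_root r p) = pred (length p).
Proof. induction p as [|a [|b q] IH]; simpl in *; auto. Qed.

Lemma cpeval_cpdiv_root r p z :
  cpeval p z = ((z - r) * cpeval (cpdiv_root r p) z + cpeval p r)%C.
Proof. induction p as [|a [|b q] IH]; simpl in *; try ring. rewrite IH. ring. Qed.

Lemma clin_comb_cpdiv_root r p u n : clin_comb p u n =
  (clin_comb (cpdiv_root r p) u (S n) - r * clin_comb (cpdiv_root r p) u n + cpeval p r * u n)%C.
Proof.
revert n. induction p as [|a [|b q] IH]; intros n; simpl in *; try ring.
rewrite (IH (S n)). ring.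
Qed.

Lemma clin_comb_nth_0 q u n : (forall k, nth k q (RtoC 0) = RtoC 0) -> clin_comb q u n = RtoC 0.
Proof.
revert n. induction q as [|b q IH]; intros n Hq; simpl; auto.
rewrite (Hq 0%nat : b = RtoC 0), IH; [ring|]. intros k. apply (Hq (S k)).
Qed.

Lemma cpeval_nth_0 q z : (forall k, nth k q (RtoC 0) = RtoC 0) -> cpeval q z = RtoC 0.
Proof.
induction q as [|b q IH]; intros Hq; simpl; auto.
rewrite (Hq 0%nat : b = RtoC 0), IH; [ring|]. intros k. apply (Hq (S k)).
Qed.

Definition Cbounded (u : nat -> C) : Prop := exists B, forall n, Cmod (u n) <= B.

Lemma Cbounded_clin_comb p u : Cbounded u -> Cbounded (clin_comb p u).
Proof.
intros [B HB]. induction p as [|a q [B' HB']].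
- exists 0. intros n. simpl. rewrite Cmod_0. lra.
- exists (Cmod a * B + B'). intros n. simpl.
  eapply Rle_trans; [apply Cmod_triangle|]. rewrite Cmod_mult.
  apply Rplus_le_compat; auto. apply Rmult_le_compat_l; auto using Cmod_ge_0.
Qed.

Lemma Cbounded_geometric_zero (y : nat -> C) (r : C) :
  (forall n, y (S n) = (r * y n)%C) -> Cmod r > 1 -> Cbounded y -> forall n, y n = RtoC 0.
Proof.
intros Hrec Hr [B HB].
assert (Hpow : forall n, y n = (r ^ n * y 0%nat)%C).
{ induction n as [|n IH]; simpl; [ring|]. rewrite Hrec, IH. ring. }
assert (H0 : y 0%nat = RtoC 0).
{ destruct (Ceq_dec (y 0%nat) (RtoC 0)) as [E|E]; auto. exfalso.
  apply Cmod_gt_0 in E.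
  destruct (Pow_x_infinity (Cmod r) ltac:(rewrite Rabs_pos_eq; lra) ((B + 1) / Cmod (y 0%nat)))
    as [N HN].
  specialize (HN N (le_n N)). specialize (HB N).
  rewrite Hpow, Cmod_mult, Cmod_pow in HB.
  rewrite Rabs_pos_eq in HN by (apply pow_le, Cmod_ge_0).
  apply Rge_le, (Rmult_le_compat_r (Cmod (y 0%nat))) in HN; [|lra].
  unfold Rdiv in HN. rewrite Rmult_assoc, Rinv_l, Rmult_1_r in HN; lra. }
intros n. rewrite Hpow, H0. ring.
Qed.

(* Each root [r] of [p] splits off the factor [X - r]: the combination taken with the
   quotient is a bounded geometric sequence of ratio [r], hence zero because [|r| > 1]. *)
Lemma Cbounded_recurrence_zero (p : list C) (u : nat -> C) :
  Cbounded u -> (forall n, clin_comb p u n = RtoC 0) ->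
  (forall z, cpeval p z = RtoC 0 -> Cmod z > 1) -> (exists z, cpeval p z <> RtoC 0) ->
  forall n, u n = RtoC 0.
Proof.
remember (length p) as N eqn:HN. revert p HN.
induction N as [|N IH]; intros p HN Hu Hrec Hroots [z0 Hz0].
- destruct p; [elim Hz0; reflexivity | discriminate].
- destruct (FTA.cpeval_root_or_const p) as [[r Hr]|Hconst].
  + set (q := cpdiv_root r p).
    assert (Hq : forall n, clin_comb q u n = RtoC 0).
    { apply Cbounded_geometric_zero with r; [|apply Hroots; auto|apply Cbounded_clin_comb; auto].
      intros n. specialize (Hrec n).
      rewrite (clin_comb_cpdiv_root r p u n), Hr in Hrec. fold q in Hrec.
      transitivity (clin_comb q u (S n) - r * clin_comb q u n + 0 * u n
                    + r * clin_comb q u n)%C; [ring|].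
      rewrite Hrec. ring. }
    apply (IH q); auto.
    * unfold q. rewrite length_cpdiv_root, <- HN. reflexivity.
    * intros z Hz. apply Hroots. rewrite (cpeval_cpdiv_root r p z), Hr. fold q. rewrite Hz. ring.
    * exists z0. intros E. apply Hz0.
      rewrite (cpeval_cpdiv_root r p z0), Hr. fold q. rewrite E. ring.
  + destruct p as [|a q]; [elim Hz0; reflexivity|].
    assert (Hq : forall k, nth k q (RtoC 0) = RtoC 0) by (intros k; apply (Hconst k)).
    assert (Ha : a <> RtoC 0).
    { intros E. apply Hz0. simpl. rewrite cpeval_nth_0, E by exact Hq. ring. }
    intros n. specialize (Hrec n). simpl in Hrec.
    rewrite clin_comb_nth_0, Cplus_0_r in Hrec by exact Hq.
    apply (f_equal (Cmult (Cinv a))) in Hrec.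
    rewrite Cmult_assoc, Cinv_l, Cmult_1_l in Hrec by exact Ha. rewrite Hrec. ring.
Qed.

Fixpoint lin_comb (p : list R) (h : nat -> R) (k : nat) : R :=
  match p with nil => 0 | a :: q => a * h k + lin_comb q h (S k) end.

Definition lsum (p : list R) (h : nat -> R) : R := lin_comb p h 0.

Lemma lin_comb_plus p f g k : lin_comb p (fun j => f j + g j) k = lin_comb p f k + lin_comb p g k.
Proof. revert k; induction p as [|a q IH]; intros k; simpl; [ring|]. rewrite IH. ring. Qed.

Lemma lin_comb_scal p c f k : lin_comb p (fun j => c * f j) k = c * lin_comb p f k.
Proof. revert k; induction p as [|a q IH]; intros k; simpl; [ring|]. rewrite IH. ring. Qed.

Lemma lin_comb_mult_r p f k x : lin_comb p f k * x = lin_comb p (fun j => f j * x) k.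
Proof. revert k; induction p as [|a q IH]; intros k; simpl; [ring|]. rewrite <- IH. ring. Qed.

Lemma lin_comb_ext_range p f g k : (forall j, (k <= j < k + length p)%nat -> f j = g j) ->
  lin_comb p f k = lin_comb p g k.
Proof.
revert k; induction p as [|a q IH]; intros k E; simpl; [ring|].
rewrite IH, E; [ring | simpl; lia |]. intros j Hj. apply E. simpl; lia.
Qed.

Lemma lin_comb_ext p f g k : (forall j, f j = g j) -> lin_comb p f k = lin_comb p g k.
Proof. intros E. apply lin_comb_ext_range. auto. Qed.

Lemma lin_comb_zero p k : lin_comb p (fun _ => 0) k = 0.
Proof. revert k; induction p as [|a q IH]; intros k; simpl; [ring|]. rewrite IH. ring. Qed.

Lemma lin_comb_comm p q F k l :
  lin_comb p (fun i => lin_comb q (F i) l) k = lin_comb q (fun j => lin_comb p (fun i => F i j) k) l.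
Proof.
revert k; induction p as [|a p IH]; intros k; simpl.
- rewrite lin_comb_zero. reflexivity.
- rewrite IH, <- lin_comb_scal, <- lin_comb_plus. reflexivity.
Qed.

Lemma lin_comb_shift p h k : lin_comb p h k = lsum p (fun j => h (k + j)%nat).
Proof.
unfold lsum. revert h. induction k as [|k IH]; intros h; [reflexivity|].
assert (Hs : forall m h', lin_comb p h' (S m) = lin_comb p (fun j => h' (S j)) m).
{ clear. induction p as [|a q IH]; intros m h'; simpl; [reflexivity|]. rewrite IH. reflexivity. }
rewrite Hs, IH. reflexivity.
Qed.

Lemma lin_comb_bound p h k B : (forall j, Rabs (h j) <= B) ->
  Rabs (lin_comb p h k) <= lin_comb (map Rabs p) (fun _ => B) k.
Proof.
intros H. revert k. induction p as [|a q IH]; intros k; simpl; [rewrite Rabs_R0; lra|].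
eapply Rle_trans; [apply Rabs_triang|]. rewrite Rabs_mult.
apply Rplus_le_compat; auto. apply Rmult_le_compat_l; auto using Rabs_pos.
Qed.

Lemma bounded_recurrence_zero (p : list R) (u : nat -> R) :
  (exists B, forall n, Rabs (u n) <= B) -> (forall n, lin_comb p u n = 0) ->
  (forall z, peval p z = RtoC 0 -> Cmod z > 1) -> forall n, u n = 0.
Proof.
intros [B HB] Hrec Hroots n.
assert (Hc : forall q k, clin_comb (map RtoC q) (fun j => RtoC (u j)) k = RtoC (lin_comb q u k)).
{ induction q as [|a q IH]; intros k; simpl; auto. rewrite IH.
  unfold Cplus, Cmult, RtoC; simpl. f_equal; ring. }
assert (Hroots' : forall z, cpeval (map RtoC p) z = RtoC 0 -> Cmod z > 1).
{ intros z. rewrite cpeval_map_RtoC. apply Hroots. }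
assert (E : RtoC (u n) = RtoC 0).
{ apply (Cbounded_recurrence_zero (map RtoC p) (fun j => RtoC (u j))); auto.
  - exists B. intros k. rewrite Cmod_R. auto.
  - intros k. rewrite Hc, Hrec. reflexivity.
  - exists (RtoC 0). intros E. apply Hroots' in E. rewrite Cmod_0 in E. lra. }
apply (f_equal fst) in E. exact E.
Qed.

(** * Integrals over a period *)

Ltac continuity_tac :=
  repeat match goal with
  | |- continuity (fun _ => ?c) => apply continuity_const; intros ? ?; reflexivity
  | |- continuity (fun x => x) => intros ?; apply continuity_pt_id
  | |- continuity (fun x => @?f x + @?g x) => apply (continuity_plus f g)
  | |- continuity (fun x => @?f x - @?g x) => apply (continuity_minus f g)
  | |- continuity (fun x => @?f x * @?g x) => apply (continuity_mult f g)
  | |- continuity (fun x => @?f x / @?g x) => apply (continuity_div f g)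
  | |- continuity (fun x => - @?f x) => apply (continuity_opp f)
  | |- continuity (fun x => Rabs (@?f x)) => apply (continuity_comp f Rabs); [|apply Rcontinuity_abs]
  | |- continuity (fun x => cos (@?f x)) => apply (continuity_comp f cos); [|apply continuity_cos]
  | |- continuity (fun x => sin (@?f x)) => apply (continuity_comp f sin); [|apply continuity_sin]
  end; auto.

Lemma continuity_ext f g : (forall x, f x = g x) -> continuity f -> continuity g.
Proof. intros E H x. apply continuity_pt_ext with f; auto. Qed.

Definition IntPi (f : R -> R) : R := RInt f (-PI) PI.

Lemma ex_RInt_continuity f a b : continuity f -> ex_RInt f a b.
Proof.
intros H. apply (ex_RInt_continuous (V := R_CompleteNormedModule)).
intros z _. apply continuity_pt_filterlim, H.
Qed.

Lemma IntPi_ext f g : (forall x, f x = g x) -> IntPi f = IntPi g.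
Proof. intros E. apply RInt_ext. auto. Qed.

Lemma IntPi_plus f g : continuity f -> continuity g ->
  IntPi (fun x => f x + g x) = IntPi f + IntPi g.
Proof. intros Hf Hg. apply (RInt_plus f g); apply ex_RInt_continuity; auto. Qed.

Lemma IntPi_minus f g : continuity f -> continuity g ->
  IntPi (fun x => f x - g x) = IntPi f - IntPi g.
Proof. intros Hf Hg. apply (RInt_minus f g); apply ex_RInt_continuity; auto. Qed.

Lemma IntPi_scal c f : continuity f -> IntPi (fun x => c * f x) = c * IntPi f.
Proof. intros Hf. apply (RInt_scal f). apply ex_RInt_continuity; auto. Qed.

Lemma IntPi_const c : IntPi (fun _ => c) = 2 * PI * c.
Proof. unfold IntPi. rewrite RInt_const. unfold scal; simpl. unfold mult; simpl. ring. Qed.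

Lemma IntPi_le f g : continuity f -> continuity g ->
  (forall x, -PI < x < PI -> f x <= g x) -> IntPi f <= IntPi g.
Proof.
intros Hf Hg H. apply RInt_le; auto using ex_RInt_continuity. pose proof PI_RGT_0; lra.
Qed.

Lemma IntPi_abs f : continuity f -> Rabs (IntPi f) <= IntPi (fun x => Rabs (f x)).
Proof. intros Hf. apply abs_RInt_le; auto using ex_RInt_continuity. pose proof PI_RGT_0; lra. Qed.

Lemma continuity_lin_comb p (F : nat -> R -> R) k : (forall j, continuity (F j)) ->
  continuity (fun w => lin_comb p (fun j => F j w) k).
Proof.
intros H. revert k; induction p as [|a q IH]; intros k; simpl; continuity_tac.
Qed.

Lemma IntPi_lin_comb p (F : nat -> R -> R) k : (forall j, continuity (F j)) ->
  IntPi (fun w => lin_comb p (fun j => F j w) k) = lin_comb p (fun j => IntPi (F j)) k.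
Proof.
intros H. revert k; induction p as [|a q IH]; intros k; simpl; [rewrite IntPi_const; ring|].
rewrite IntPi_plus, IntPi_scal, IH; continuity_tac; auto using continuity_lin_comb.
Qed.

Lemma sin_INR_PI m : sin (INR m * PI) = 0.
Proof.
induction m as [|m IH]; [rewrite Rmult_0_l; apply sin_0|].
rewrite S_INR, Rmult_plus_distr_r, Rmult_1_l, neg_sin, IH. ring.
Qed.

Lemma IntPi_cos_nat (m : nat) : (0 < m)%nat -> IntPi (fun w => cos (INR m * w)) = 0.
Proof.
intros Hm. assert (Hm' : INR m <> 0) by (apply not_0_INR; lia).
unfold IntPi.
rewrite (is_RInt_unique _ _ _ (sin (INR m * PI) / INR m - sin (INR m * - PI) / INR m)).
- rewrite Ropp_mult_distr_r_reverse, sin_neg, sin_INR_PI. field. exact Hm'.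
- apply (is_RInt_derive (fun w => sin (INR m * w) / INR m)).
  + intros x _. auto_derive; [exact I|]. field. exact Hm'.
  + intros x _. apply continuity_pt_filterlim.
    assert (Hc : continuity (fun w => cos (INR m * w))) by continuity_tac. apply Hc.
Qed.

Lemma continuity_pt_ge0_left (h : R -> R) a b : b < a -> continuity_pt h a ->
  (forall x, b < x < a -> 0 <= h x) -> 0 <= h a.
Proof.
intros Hba Hc Hh. destruct (Rle_or_lt 0 (h a)) as [Ha|Ha]; auto. exfalso.
destruct (Hc (- h a)) as [delta [Hdelta Hnear]]; [lra|].
set (x := a - Rmin delta (a - b) / 2).
assert (Hmin : 0 < Rmin delta (a - b) <= a - b /\ Rmin delta (a - b) <= delta).
{ split; [split; [apply Rmin_pos|apply Rmin_r]|apply Rmin_l]; lra. }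
assert (Hx : b < x < a) by (unfold x; lra).
assert (Hdist : Rabs (h x - h a) < - h a).
{ apply Hnear. split; [split; [exact I | unfold x; lra]|].
  simpl. unfold R_dist, x. rewrite Rabs_left; lra. }
apply Rabs_def2 in Hdist. specialize (Hh x Hx). lra.
Qed.

Lemma is_derive_IntPi_param (f df : R -> R -> R) x (r : posreal) :
  (forall u w, Rabs (u - x) < r -> is_derive (fun z => f z w) u (df u w)) ->
  (forall w, continuity_2d_pt df x w) ->
  (forall u, Rabs (u - x) < r -> continuity (f u)) ->
  is_derive (fun u => IntPi (f u)) x (IntPi (df x)).
Proof.
intros Hd Hc Hf.
assert (Hx : Rabs (x - x) < r) by (rewrite Rminus_eq_0, Rabs_R0; apply cond_pos).
unfold IntPi. rewrite (RInt_ext (df x) (fun t => Derive (fun u => f u t) x)).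
- apply is_derive_RInt_param.
  + exists r. intros y Hy t _. eexists. apply Hd. exact Hy.
  + intros t _. apply continuity_2d_pt_ext_loc with df; [|apply Hc].
    exists r. intros u v Hu _. symmetry. apply is_derive_unique, Hd. exact Hu.
  + exists r. intros y Hy. apply ex_RInt_continuity, Hf, Hy.
- intros t _. symmetry. apply is_derive_unique, Hd, Hx.
Qed.

Lemma is_derive_div_eq_0 (f h : R -> R) x df dh : is_derive f x df -> is_derive h x dh ->
  h x <> 0 -> is_derive (fun u => f u / h u) x 0 -> df * h x - f x * dh = 0.
Proof.
intros Hf Hh Hx H0.
pose proof (eq_trans (eq_sym (is_derive_unique _ _ _ H0))
                     (is_derive_unique _ _ _ (is_derive_div _ _ x _ _ Hf Hh Hx))) as E.
symmetry in E. apply Rmult_integral in E as [E|E]; [exact E|].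
exfalso. revert E. apply Rinv_neq_0_compat, pow_nonzero, Hx.
Qed.

(** * Polynomials on the unit circle *)

Lemma eiw_mult s t : Cmult (eiw s) (eiw t) = eiw (s + t).
Proof. unfold eiw, Cmult; simpl. rewrite cos_plus, sin_plus. f_equal; ring. Qed.

Lemma Cmod_eiw w : Cmod (eiw w) = 1.
Proof.
unfold Cmod, eiw; simpl. pose proof (sin2_cos2 w) as E. unfold Rsqr in E.
replace (cos w * (cos w * 1) + sin w * (sin w * 1)) with 1 by lra. apply sqrt_1.
Qed.

Lemma peval_eiw p w :
  peval p (eiw w) = (lsum p (fun j => cos (INR j * w)), lsum p (fun j => sin (INR j * w))).
Proof.
assert (Hk : forall k, Cmult (eiw (INR k * w)) (peval p (eiw w)) =
  (lin_comb p (fun j => cos (INR j * w)) k, lin_comb p (fun j => sin (INR j * w)) k)).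
{ induction p as [|a q IH]; intros k; simpl.
  - unfold Cmult, RtoC; simpl. f_equal; ring.
  - transitivity (Cplus (Cmult (RtoC a) (eiw (INR k * w)))
                        (Cmult (Cmult (eiw (INR k * w)) (eiw w)) (peval q (eiw w)))); [ring|].
    rewrite eiw_mult. replace (INR k * w + w) with (INR (S k) * w) by (rewrite S_INR; ring).
    rewrite IH. unfold Cplus, Cmult, RtoC, eiw; simpl. f_equal; ring. }
unfold lsum. rewrite <- Hk. simpl. rewrite Rmult_0_l.
replace (eiw 0) with (RtoC 1) by (unfold eiw; rewrite cos_0, sin_0; reflexivity). ring.
Qed.

Lemma Cmod_peval_eiw_sq p w :
  Cmod (peval p (eiw w)) ^ 2 = lsum p (fun k => lsum p (fun l => cos ((INR k - INR l) * w))).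
Proof.
rewrite Cmod2_alt, peval_eiw. simpl Re; simpl Im. unfold lsum.
rewrite <- !Rsqr_pow2. unfold Rsqr. rewrite !lin_comb_mult_r, <- lin_comb_plus.
apply lin_comb_ext. intros k.
rewrite <- !lin_comb_scal, <- lin_comb_plus. apply lin_comb_ext. intros l.
rewrite Rmult_minus_distr_r, cos_minus. ring.
Qed.

Lemma continuity_Cmod_peval_eiw_sq p : continuity (fun w => Cmod (peval p (eiw w)) ^ 2).
Proof.
apply continuity_ext with (fun w => lsum p (fun k => lsum p (fun l => cos ((INR k - INR l) * w)))).
{ intros x. rewrite Cmod_peval_eiw_sq. reflexivity. }
apply continuity_lin_comb. intros j. apply continuity_lin_comb. intros l. continuity_tac.
Qed.

Lemma peval_eiw_neq_0 p w : (forall z, peval p z = RtoC 0 -> Cmod z > 1) ->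
  peval p (eiw w) <> RtoC 0.
Proof. intros H E. apply H in E. rewrite Cmod_eiw in E. lra. Qed.

(** * The Poisson kernel *)

Fixpoint partial_sum (f : nat -> R) (N : nat) : R :=
  match N with O => 0 | S n => partial_sum f n + f n end.

Lemma partial_sum_ext_range f g N : (forall i, (i < N)%nat -> f i = g i) ->
  partial_sum f N = partial_sum g N.
Proof. induction N as [|N IH]; intros H; simpl; auto. rewrite IH, H; auto. Qed.

Lemma partial_sum_plus f g N :
  partial_sum (fun i => f i + g i) N = partial_sum f N + partial_sum g N.
Proof. induction N as [|N IH]; simpl; [ring|]. rewrite IH; ring. Qed.

Lemma partial_sum_scal c f N : partial_sum (fun i => c * f i) N = c * partial_sum f N.
Proof. induction N as [|N IH]; simpl; [ring|]. rewrite IH; ring. Qed.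

Lemma partial_sum_succ_l f n : partial_sum f (S n) = f 0%nat + partial_sum (fun i => f (S i)) n.
Proof. induction n as [|n IH]; simpl in *; [ring|]. rewrite IH. ring. Qed.

Lemma partial_sum_stable f M N : (forall i, (M <= i)%nat -> f i = 0) -> (M <= N)%nat ->
  partial_sum f N = partial_sum f M.
Proof.
intros H HMN. induction HMN as [|N HMN IH]; [reflexivity|].
simpl. rewrite IH, H by lia. ring.
Qed.

Lemma lin_comb_partial_sum p h k :
  lin_comb p h k = partial_sum (fun i => nth i p 0 * h (k + i)%nat) (length p).
Proof.
revert k; induction p as [|a q IH]; intros k; [reflexivity|].
simpl lin_comb. simpl length. rewrite partial_sum_succ_l, IH, Nat.add_0_r.
f_equal. apply partial_sum_ext_range. intros i _. simpl. do 2 f_equal. lia.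
Qed.

Lemma rpeval_partial_sum p x : rpeval p x = partial_sum (fun i => nth i p 0 * x ^ i) (length p).
Proof.
induction p as [|a q IH]; [reflexivity|].
simpl rpeval. simpl length. rewrite partial_sum_succ_l, IH, <- partial_sum_scal.
simpl. f_equal; [ring|]. apply partial_sum_ext_range. intros; ring.
Qed.

Fixpoint coef_list (f : nat -> R) (n : nat) : list R :=
  match n with O => nil | S n' => coef_list f n' ++ f n' :: nil end.

Lemma length_coef_list f n : length (coef_list f n) = n.
Proof. induction n as [|n IH]; simpl; auto. rewrite length_app, IH. simpl. lia. Qed.

Lemma nth_coef_list f n i : (i < n)%nat -> nth i (coef_list f n) 0 = f i.
Proof.
induction n as [|n IH]; intros Hi; [lia|]. simpl.
destruct (Nat.eq_dec i n) as [->|Hne].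
- rewrite app_nth2, length_coef_list, Nat.sub_diag by (rewrite length_coef_list; lia). reflexivity.
- rewrite app_nth1 by (rewrite length_coef_list; lia). apply IH. lia.
Qed.

Lemma rpeval_coef_list f n x : rpeval (coef_list f n) x = partial_sum (fun i => f i * x ^ i) n.
Proof.
rewrite rpeval_partial_sum, length_coef_list. apply partial_sum_ext_range.
intros i Hi. rewrite nth_coef_list; auto.
Qed.

Lemma partial_sum_cauchy (a b : nat -> R) K :
  partial_sum (fun N => partial_sum (fun i => a i * b (N - i)%nat) (S N)) K =
  partial_sum (fun i => a i * partial_sum b (K - i)) K.
Proof.
induction K as [|K IH]; [reflexivity|].
change (partial_sum (fun N => partial_sum (fun i => a i * b (N - i)%nat) (S N)) K
        + partial_sum (fun i => a i * b (K - i)%nat) (S K)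
        = partial_sum (fun i => a i * partial_sum b (S K - i)) K + a K * partial_sum b (S K - K)).
rewrite IH.
rewrite (partial_sum_ext_range (fun i => a i * partial_sum b (S K - i))
           (fun i => a i * partial_sum b (K - i) + a i * b (K - i)%nat)).
2: { intros i Hi. replace (S K - i)%nat with (S (K - i)) by lia. simpl. ring. }
rewrite partial_sum_plus, Nat.sub_succ_l, Nat.sub_diag by lia. simpl. rewrite Nat.sub_diag. ring.
Qed.

Lemma is_lim_seq_partial_sum (F : nat -> nat -> R) (l : nat -> R) L :
  (forall i, is_lim_seq (F i) (l i)) ->
  is_lim_seq (fun K => partial_sum (fun i => F i K) L) (partial_sum l L).
Proof.
intros H. induction L as [|L IH]; simpl; [apply is_lim_seq_const|].
apply is_lim_seq_plus'; auto.
Qed.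

Lemma continuity_partial_sum (F : nat -> R -> R) N : (forall n, continuity (F n)) ->
  continuity (fun x => partial_sum (fun n => F n x) N).
Proof. intros H. induction N as [|N IH]; simpl; continuity_tac. Qed.

Lemma IntPi_partial_sum (F : nat -> R -> R) N : (forall n, continuity (F n)) ->
  IntPi (fun x => partial_sum (fun n => F n x) N) = partial_sum (fun n => IntPi (F n)) N.
Proof.
intros H. induction N as [|N IH]; simpl; [rewrite IntPi_const; ring|].
rewrite IntPi_plus, IH; auto using continuity_partial_sum.
Qed.

Definition poisson_den (x w : R) : R := 1 + 2 * x * cos w + x ^ 2.

Definition poisson (x w : R) : R := (1 + x * cos w) / poisson_den x w.

Definition poisson_tail (x : R) (N : nat) (w : R) : R :=
  (- x) ^ N * (cos (INR N * w) + x * cos ((INR N - 1) * w)) / poisson_den x w.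

Lemma poisson_den_lb x w : Rabs x < 1 -> (1 - Rabs x) ^ 2 <= poisson_den x w.
Proof.
intros Hx. unfold poisson_den. pose proof (COS_bound w).
assert (Hxc : Rabs (x * cos w) <= Rabs x).
{ rewrite Rabs_mult. assert (Rabs (cos w) <= 1) by (apply Rabs_le; lra).
  pose proof (Rabs_pos x). nra. }
apply Rabs_le_between in Hxc. rewrite <- (pow2_abs x). nra.
Qed.

Lemma poisson_den_pos x w : Rabs x < 1 -> 0 < poisson_den x w.
Proof. intros Hx. eapply Rlt_le_trans; [|apply poisson_den_lb; auto]. apply pow_lt. lra. Qed.

Lemma continuity_poisson_den x : continuity (poisson_den x).
Proof. unfold poisson_den. continuity_tac. Qed.

Lemma continuity_poisson x : Rabs x < 1 -> continuity (poisson x).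
Proof.
intros Hx. unfold poisson. continuity_tac; auto using continuity_poisson_den.
intros w. apply Rgt_not_eq, poisson_den_pos; auto.
Qed.

Lemma continuity_poisson_tail x N : Rabs x < 1 -> continuity (poisson_tail x N).
Proof.
intros Hx. unfold poisson_tail. continuity_tac; auto using continuity_poisson_den.
intros w. apply Rgt_not_eq, poisson_den_pos; auto.
Qed.

Lemma two_poisson_sub_1 x w : Rabs x < 1 -> 2 * poisson x w - 1 = (1 - x ^ 2) / poisson_den x w.
Proof.
intros Hx. pose proof (poisson_den_pos x w Hx). unfold poisson. unfold poisson_den in *.
field. lra.
Qed.

Lemma partial_sum_poisson x w N : Rabs x < 1 ->
  partial_sum (fun n => (- x) ^ n * cos (INR n * w)) N = poisson x w - poisson_tail x N w.
Proof.
intros Hx. pose proof (poisson_den_pos x w Hx) as HD. unfold poisson_tail, poisson.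
unfold poisson_den in *. induction N as [|N IH]; simpl partial_sum.
- simpl. replace ((0 - 1) * w) with (- w) by ring. rewrite Rmult_0_l, cos_0, cos_neg.
  field. lra.
- rewrite IH, S_INR.
  replace ((INR N + 1) * w) with (INR N * w + w) by ring.
  replace ((INR N + 1 - 1) * w) with (INR N * w) by ring.
  replace ((INR N - 1) * w) with (INR N * w - w) by ring.
  rewrite cos_plus, cos_minus. simpl. field. lra.
Qed.

Lemma poisson_tail_bound x N w : Rabs x < 1 ->
  Rabs (poisson_tail x N w) <= 2 / (1 - Rabs x) ^ 2 * Rabs x ^ N.
Proof.
intros Hx. pose proof (poisson_den_lb x w Hx). pose proof (poisson_den_pos x w Hx).
assert (Hp : 0 < (1 - Rabs x) ^ 2) by (apply pow_lt; lra).
unfold poisson_tail, Rdiv.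
rewrite !Rabs_mult, Rabs_inv, <- RPow_abs, Rabs_Ropp, (Rabs_right (poisson_den x w)) by lra.
assert (Hc : Rabs (cos (INR N * w) + x * cos ((INR N - 1) * w)) <= 2).
{ eapply Rle_trans; [apply Rabs_triang|]. rewrite Rabs_mult.
  pose proof (COS_bound (INR N * w)). pose proof (COS_bound ((INR N - 1) * w)).
  assert (Rabs (cos (INR N * w)) <= 1) by (apply Rabs_le; lra).
  assert (Rabs (cos ((INR N - 1) * w)) <= 1) by (apply Rabs_le; lra).
  pose proof (Rabs_pos (cos ((INR N - 1) * w))). nra. }
assert (0 <= Rabs x ^ N) by (apply pow_le, Rabs_pos).
assert (/ poisson_den x w <= / (1 - Rabs x) ^ 2) by (apply Rinv_le_contravar; lra).
assert (0 <= / poisson_den x w) by (apply Rlt_le, Rinv_0_lt_compat; lra).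
pose proof (Rabs_pos (cos (INR N * w) + x * cos ((INR N - 1) * w))).
replace (2 * / (1 - Rabs x) ^ 2 * Rabs x ^ N) with (Rabs x ^ N * (2 * / (1 - Rabs x) ^ 2)) by ring.
rewrite Rmult_assoc. apply Rmult_le_compat_l; auto. apply Rmult_le_compat; auto.
Qed.

(* The series of Fourier coefficients may be integrated termwise: the tails are uniformly
   [O(|x|^N)]. *)
Lemma IntPi_poisson_series (h : R -> R) x : continuity h -> Rabs x < 1 ->
  is_lim_seq (fun N => partial_sum (fun n => (- x) ^ n * IntPi (fun w => h w * cos (INR n * w))) N)
             (IntPi (fun w => h w * poisson x w)).
Proof.
intros Hh Hx. pose proof (continuity_poisson x Hx). pose proof (continuity_poisson_tail x).
assert (Hsum : forall N,
  partial_sum (fun n => (- x) ^ n * IntPi (fun w => h w * cos (INR n * w))) N =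
  IntPi (fun w => h w * poisson x w) - IntPi (fun w => h w * poisson_tail x N w)).
{ intros N. rewrite <- IntPi_minus by continuity_tac.
  rewrite (IntPi_ext _ (fun w => partial_sum (fun n => (- x) ^ n * (h w * cos (INR n * w))) N)).
  - rewrite IntPi_partial_sum by (intros; continuity_tac).
    apply partial_sum_ext_range. intros n _. rewrite IntPi_scal by continuity_tac. reflexivity.
  - intros w. rewrite <- Rmult_minus_distr_l, <- partial_sum_poisson, <- partial_sum_scal by auto.
    apply partial_sum_ext_range. intros; ring. }
set (C := 2 / (1 - Rabs x) ^ 2 * IntPi (fun w => Rabs (h w))).
assert (Htail : forall N, Rabs (IntPi (fun w => h w * poisson_tail x N w)) <= C * Rabs x ^ N).
{ intros N. eapply Rle_trans; [apply IntPi_abs; continuity_tac|].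
  replace (C * Rabs x ^ N) with (IntPi (fun w => 2 / (1 - Rabs x) ^ 2 * Rabs x ^ N * Rabs (h w)))
    by (rewrite IntPi_scal by continuity_tac; unfold C; ring).
  apply IntPi_le; [continuity_tac..|]. intros w _. rewrite Rabs_mult, Rmult_comm.
  apply Rmult_le_compat_r; auto using Rabs_pos, poisson_tail_bound. }
assert (Hgeom : is_lim_seq (fun N => C * Rabs x ^ N) 0).
{ rewrite <- (Rmult_0_r C). apply (is_lim_seq_scal_l _ C 0).
  apply is_lim_seq_geom. rewrite Rabs_Rabsolu. exact Hx. }
apply is_lim_seq_ext with (1 := fun N => eq_sym (Hsum N)).
replace (Finite (IntPi (fun w => h w * poisson x w)))
  with (Finite (IntPi (fun w => h w * poisson x w) - 0)) by (f_equal; ring).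
apply is_lim_seq_minus'; [apply is_lim_seq_const|].
apply is_lim_seq_le_le with (u := fun N => - (C * Rabs x ^ N)) (w := fun N => C * Rabs x ^ N).
- intros N. apply Rabs_le_between, Htail.
- replace (Finite 0) with (Rbar_opp 0) by (simpl; f_equal; ring).
  exact (proj1 (is_lim_seq_opp _ _) Hgeom).
- exact Hgeom.
Qed.

Lemma IntPi_poisson x : Rabs x < 1 -> IntPi (poisson x) = 2 * PI.
Proof.
intros Hx. pose proof (IntPi_poisson_series (fun _ => 1) x ltac:(continuity_tac) Hx) as Hlim.
assert (Hsum : forall N,
  partial_sum (fun n => (- x) ^ n * IntPi (fun w => 1 * cos (INR n * w))) (S N) = 2 * PI).
{ induction N as [|N IH].
  - simpl. rewrite (IntPi_ext _ (fun _ => 1)), IntPi_const; [ring|].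
    intros w. rewrite Rmult_0_l, cos_0. ring.
  - change (partial_sum (fun n => (- x) ^ n * IntPi (fun w => 1 * cos (INR n * w))) (S N)
            + (- x) ^ S N * IntPi (fun w => 1 * cos (INR (S N) * w)) = 2 * PI).
    rewrite IH, (IntPi_ext _ (fun w => cos (INR (S N) * w))), IntPi_cos_nat
      by (intros; ring || lia).
    ring. }
apply is_lim_seq_incr_1 in Hlim.
apply (is_lim_seq_ext _ (fun _ => 2 * PI)) in Hlim; [|exact Hsum].
rewrite (IntPi_ext _ (fun w => 1 * poisson x w)) by (intros; ring).
apply is_lim_seq_unique in Hlim. rewrite Lim_seq_const in Hlim. injection Hlim. auto.
Qed.

Lemma Cmod_1_plus_eiw_sq x w :
  Cmod (Cplus (RtoC 1) (Cmult (RtoC x) (eiw w))) ^ 2 = poisson_den x w.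
Proof.
rewrite Cmod2_alt. unfold poisson_den, eiw, Cplus, Cmult, RtoC; simpl.
pose proof (sin2_cos2 w) as E. unfold Rsqr in E. nra.
Qed.

Lemma RInt_C_pair (u v : R -> R) a b : continuity u -> continuity v ->
  RInt (V := C_R_CompleteNormedModule) (fun w => (u w, v w)) a b = (RInt u a b, RInt v a b).
Proof.
intros Hu Hv.
apply (is_RInt_unique (V := C_R_CompleteNormedModule)).
apply (is_RInt_fct_extend_pair (U := R_NormedModule) (V := R_NormedModule) (fun w => (u w, v w)));
  apply (RInt_correct (V := R_CompleteNormedModule)); apply ex_RInt_continuity; auto.
Qed.

Lemma poisson_partial_fractions t a w : Rabs t < 1 -> Rabs a < 1 -> t <> a -> a * t <> 1 ->
  (cos w + a) / (poisson_den t w * poisson_den a w) =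
  ((poisson a w - poisson t w) / (t - a) + t * (1 - poisson a w - poisson t w) / (1 - a * t))
  / (1 - t ^ 2).
Proof.
intros Ht Ha Hta Hat. pose proof (poisson_den_pos t w Ht). pose proof (poisson_den_pos a w Ha).
assert (t ^ 2 < 1) by (rewrite <- (pow2_abs t); pose proof (Rabs_pos t); nra).
unfold poisson. unfold poisson_den in *. field. repeat split; lra.
Qed.

(** * The spectral density of an invertible ARMA process *)

Section ARMA.

Variables (sigma2 : R) (eta phi : list R).
Hypothesis Hsigma2 : sigma2 > 0.
Hypothesis HARMA : invertible_ARMA eta phi.

Local Notation g := (spec_dens sigma2 eta phi).

Lemma phi_roots_outside : forall z, peval phi z = RtoC 0 -> Cmod z > 1.
Proof. apply HARMA. Qed.

Lemma spec_dens_eq w : g w =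
  sigma2 / (2 * PI) * (Cmod (peval eta (eiw w)) ^ 2 / Cmod (peval phi (eiw w)) ^ 2).
Proof.
unfold spec_dens, kappa. rewrite Cmod_div by (apply peval_eiw_neq_0, phi_roots_outside).
unfold Rdiv at 2 3. rewrite Rpow_mult_distr, pow_inv. reflexivity.
Qed.

Lemma Cmod_peval_phi_eiw_sq_pos w : 0 < Cmod (peval phi (eiw w)) ^ 2.
Proof. apply pow_lt, Cmod_gt_0, peval_eiw_neq_0, phi_roots_outside. Qed.

Lemma spec_dens_mul_phi w :
  g w * Cmod (peval phi (eiw w)) ^ 2 = sigma2 / (2 * PI) * Cmod (peval eta (eiw w)) ^ 2.
Proof.
rewrite spec_dens_eq. pose proof PI_RGT_0.
field. split; [lra|]. apply Rgt_not_eq, Cmod_gt_0, peval_eiw_neq_0, phi_roots_outside.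
Qed.

Lemma continuity_spec_dens : continuity g.
Proof.
apply continuity_ext with (fun w => sigma2 / (2 * PI) *
  (Cmod (peval eta (eiw w)) ^ 2 / Cmod (peval phi (eiw w)) ^ 2)).
{ intros x. rewrite spec_dens_eq. reflexivity. }
pose proof (continuity_Cmod_peval_eiw_sq eta). pose proof (continuity_Cmod_peval_eiw_sq phi).
continuity_tac. intros x. apply Rgt_not_eq, Cmod_peval_phi_eiw_sq_pos.
Qed.

Lemma spec_dens_pos w : 0 < g w.
Proof.
rewrite spec_dens_eq. pose proof PI_RGT_0. pose proof (Cmod_peval_phi_eiw_sq_pos w).
assert (0 < Cmod (peval eta (eiw w)) ^ 2).
{ apply pow_lt, Cmod_gt_0, peval_eiw_neq_0. apply HARMA. }
apply Rmult_lt_0_compat; apply Rdiv_lt_0_compat; lra.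
Qed.

Definition autocov (t : R) : R := IntPi (fun w => g w * cos (t * w)) / (2 * PI).

Lemma IntPi_spec_dens : IntPi g = 2 * PI * autocov 0.
Proof.
unfold autocov. rewrite (IntPi_ext (fun w => g w * cos (0 * w)) g).
- field. pose proof PI_RGT_0. lra.
- intros w. rewrite Rmult_0_l, cos_0. ring.
Qed.

Lemma autocov_bound t : Rabs (autocov t) <= autocov 0.
Proof.
pose proof PI_RGT_0. pose proof continuity_spec_dens.
unfold autocov, Rdiv. rewrite Rabs_mult, (Rabs_right (/ (2 * PI)))
  by (apply Rle_ge, Rlt_le, Rinv_0_lt_compat; lra).
apply Rmult_le_compat_r; [apply Rlt_le, Rinv_0_lt_compat; lra|].
eapply Rle_trans; [apply IntPi_abs; continuity_tac|].
apply IntPi_le; [continuity_tac..|]. intros w _.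
rewrite Rmult_0_l, cos_0, Rmult_1_r, Rabs_mult, Rabs_right by (apply Rle_ge, Rlt_le, spec_dens_pos).
pose proof (spec_dens_pos w). pose proof (COS_bound (t * w)).
assert (Rabs (cos (t * w)) <= 1) by (apply Rabs_le; lra). nra.
Qed.

Lemma IntPi_spec_dens_cos_cos a b :
  IntPi (fun w => g w * (cos (a * w) * cos (b * w))) = PI * (autocov (a + b) + autocov (a - b)).
Proof.
pose proof PI_RGT_0. pose proof continuity_spec_dens.
rewrite (IntPi_ext _ (fun w => / 2 * (g w * cos ((a + b) * w) + g w * cos ((a - b) * w)))).
- rewrite IntPi_scal, IntPi_plus by continuity_tac. unfold autocov. field. lra.
- intros w. rewrite Rmult_plus_distr_r, Rmult_minus_distr_r, cos_plus, cos_minus. field.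
Qed.

Lemma IntPi_spec_dens_cos_sqmod_phi t :
  IntPi (fun w => g w * cos (t * w) * Cmod (peval phi (eiw w)) ^ 2) =
  2 * PI * lsum phi (fun k => lsum phi (fun l => autocov (t + (INR k - INR l)))).
Proof.
pose proof continuity_spec_dens. unfold lsum.
rewrite (IntPi_ext _ (fun w => lin_comb phi (fun k => lin_comb phi (fun l =>
     g w * (cos (t * w) * cos ((INR k - INR l) * w))) 0) 0)).
2: { intros w. rewrite Cmod_peval_eiw_sq. unfold lsum. rewrite <- lin_comb_scal.
     apply lin_comb_ext. intros k. rewrite <- lin_comb_scal. apply lin_comb_ext. intros l. ring. }
rewrite IntPi_lin_comb.
2: { intros k. apply continuity_lin_comb. intros l. continuity_tac. }
rewrite (lin_comb_ext _ _ (fun k => PI * lin_comb phi (fun l => autocov (t + (INR k - INR l))) 0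
                                + PI * lin_comb phi (fun l => autocov (t - (INR k - INR l))) 0)).
2: { intros k. rewrite IntPi_lin_comb by (intros l; continuity_tac).
     rewrite <- !lin_comb_scal, <- lin_comb_plus. apply lin_comb_ext. intros l.
     rewrite IntPi_spec_dens_cos_cos. ring. }
rewrite lin_comb_plus, !lin_comb_scal, (lin_comb_comm phi phi (fun k l => autocov (t - _))).
replace (lin_comb phi (fun l => lin_comb phi (fun k => autocov (t - (INR k - INR l))) 0) 0)
  with (lin_comb phi (fun k => lin_comb phi (fun l => autocov (t + (INR k - INR l))) 0) 0).
- ring.
- apply lin_comb_ext. intros k. apply lin_comb_ext. intros l. f_equal. ring.
Qed.

Definition filtered_autocov (n : nat) : R := lsum phi (fun l => autocov (INR n - INR l)).

Lemma lin_comb_filtered_autocov n : lin_comb phi filtered_autocov n =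
  IntPi (fun w => g w * cos (INR n * w) * Cmod (peval phi (eiw w)) ^ 2) / (2 * PI).
Proof.
rewrite IntPi_spec_dens_cos_sqmod_phi, lin_comb_shift. pose proof PI_RGT_0.
field_simplify; [|lra]. unfold filtered_autocov. unfold lsum at 1 3.
apply lin_comb_ext. intros k. apply lin_comb_ext. intros l. rewrite plus_INR. f_equal. ring.
Qed.

Lemma IntPi_cos_cos_nat_0 (n k l : nat) : (l < n + k)%nat -> (k < n + l)%nat ->
  IntPi (fun w => cos (INR n * w) * cos ((INR k - INR l) * w)) = 0.
Proof.
intros H1 H2.
rewrite (IntPi_ext _ (fun w => / 2 * (cos (INR (n + k - l) * w) + cos (INR (n + l - k) * w)))).
- rewrite IntPi_scal, IntPi_plus, !IntPi_cos_nat by (lia || continuity_tac). ring.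
- intros w. rewrite !minus_INR, !plus_INR by lia.
  replace ((INR n + INR k - INR l) * w) with (INR n * w + (INR k - INR l) * w) by ring.
  replace ((INR n + INR l - INR k) * w) with (INR n * w - (INR k - INR l) * w) by ring.
  rewrite cos_plus, cos_minus. field.
Qed.

(* [g |φ|^2] is a trigonometric polynomial of degree [< length eta]. *)
Lemma lin_comb_filtered_autocov_eventually_0 n : (length eta <= n)%nat ->
  lin_comb phi filtered_autocov n = 0.
Proof.
intros Hn. rewrite lin_comb_filtered_autocov. pose proof PI_RGT_0.
rewrite (IntPi_ext _ (fun w => sigma2 / (2 * PI) * lsum eta (fun k => lsum eta (fun l =>
   cos (INR n * w) * cos ((INR k - INR l) * w))))).
2: { intros w. replace (g w * cos (INR n * w) * Cmod (peval phi (eiw w)) ^ 2)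
       with (g w * Cmod (peval phi (eiw w)) ^ 2 * cos (INR n * w)) by ring.
     rewrite spec_dens_mul_phi, Cmod_peval_eiw_sq, Rmult_assoc.
     f_equal. unfold lsum. rewrite lin_comb_mult_r. apply lin_comb_ext. intros k.
     rewrite Rmult_comm, <- lin_comb_scal. reflexivity. }
unfold lsum. rewrite IntPi_scal, IntPi_lin_comb.
- rewrite (lin_comb_ext_range _ _ (fun _ => 0)), lin_comb_zero; [field; lra|].
  intros k Hk. rewrite IntPi_lin_comb by (intros; continuity_tac).
  rewrite (lin_comb_ext_range _ _ (fun _ => 0)), lin_comb_zero; [reflexivity|].
  intros l Hl. apply IntPi_cos_cos_nat_0; lia.
- intros k. apply continuity_lin_comb. intros l. continuity_tac.
- apply continuity_lin_comb. intros k. apply continuity_lin_comb. intros l. continuity_tac.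
Qed.

Lemma filtered_autocov_eventually_0 n : (length eta <= n)%nat -> filtered_autocov n = 0.
Proof.
intros Hn. replace n with ((n - length eta) + length eta)%nat by lia.
apply (bounded_recurrence_zero phi (fun k => filtered_autocov (k + length eta))).
- exists (lin_comb (map Rabs phi) (fun _ => autocov 0) 0). intros k.
  apply lin_comb_bound. intros j. apply autocov_bound.
- intros k. rewrite lin_comb_shift.
  rewrite <- (lin_comb_filtered_autocov_eventually_0 (k + length eta)) by lia.
  rewrite lin_comb_shift. unfold lsum. apply lin_comb_ext. intros j. f_equal. lia.
- apply phi_roots_outside.
Qed.

Definition psi (x : R) : R := IntPi (fun w => g w * poisson x w) / (2 * PI).

Lemma IntPi_spec_dens_poisson x : IntPi (fun w => g w * poisson x w) = 2 * PI * psi x.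
Proof. unfold psi. field. pose proof PI_RGT_0. lra. Qed.

Lemma psi_series x : Rabs x < 1 ->
  is_lim_seq (fun N => partial_sum (fun n => (- x) ^ n * autocov (INR n)) N) (psi x).
Proof.
intros Hx. pose proof PI_RGT_0.
pose proof (IntPi_poisson_series g x continuity_spec_dens Hx) as Hlim.
apply (is_lim_seq_scal_l _ (/ (2 * PI))) in Hlim.
unfold psi, Rdiv. rewrite Rmult_comm.
eapply is_lim_seq_ext; [|exact Hlim]. intros N. simpl. rewrite <- partial_sum_scal.
apply partial_sum_ext_range. intros i _. unfold autocov. field. lra.
Qed.

(* The coefficient of [t^N] in the Cauchy product [φ(t) Σ_n γ(n) t^n]. *)
Definition psi_num_coef (N : nat) : R :=
  partial_sum (fun i => nth i phi 0 * autocov (INR (N - i))) (S N).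

Lemma psi_num_coef_eventually_0 N : (length phi <= N)%nat -> (length eta <= N)%nat ->
  psi_num_coef N = 0.
Proof.
intros Hphi Heta. rewrite <- (filtered_autocov_eventually_0 N Heta).
unfold psi_num_coef, filtered_autocov, lsum. rewrite lin_comb_partial_sum.
rewrite (partial_sum_stable _ (length phi) (S N));
  [|intros i Hi; rewrite nth_overflow by lia; ring | lia].
apply partial_sum_ext_range. intros i Hi. rewrite minus_INR by lia. reflexivity.
Qed.

Definition psi_num_coefs : list R := coef_list psi_num_coef (Nat.max (length phi) (length eta)).

Definition psi_num (x : R) : R := rpeval psi_num_coefs (- x).
Definition psi_den (x : R) : R := rpeval phi (- x).

Lemma is_lim_seq_psi_num_coef_series x : Rabs x < 1 ->
  is_lim_seq (fun K => partial_sum (fun N => psi_num_coef N * (- x) ^ N) K)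
             (psi_den x * psi x).
Proof.
intros Hx. set (t := - x). set (L := length phi).
set (a := fun i => nth i phi 0 * t ^ i). set (b := fun m => autocov (INR m) * t ^ m).
apply is_lim_seq_ext_loc with (fun K => partial_sum (fun i => a i * partial_sum b (K - i)) L).
- exists L. intros K HK.
  rewrite <- (partial_sum_stable (fun i => a i * partial_sum b (K - i)) L K);
    [|intros i Hi; unfold a; rewrite nth_overflow by lia; ring|lia].
  rewrite <- partial_sum_cauchy. apply partial_sum_ext_range. intros N _. unfold psi_num_coef.
  rewrite Rmult_comm, <- partial_sum_scal. apply partial_sum_ext_range. intros i Hi. unfold a, b.
  replace (t ^ N) with (t ^ i * t ^ (N - i)) by (rewrite <- pow_add; f_equal; lia). ring.
- unfold psi_den. rewrite rpeval_partial_sum, Rmult_comm, <- partial_sum_scal.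
  apply is_lim_seq_partial_sum. intros i. rewrite Rmult_comm.
  apply is_lim_seq_mult'; [apply is_lim_seq_const|].
  apply (is_lim_seq_incr_n _ i). eapply is_lim_seq_ext; [|apply (psi_series x Hx)].
  intros K. rewrite Nat.add_sub. apply partial_sum_ext_range. intros; unfold b, t. ring.
Qed.

Lemma psi_den_mul_psi x : Rabs x < 1 -> psi_den x * psi x = psi_num x.
Proof.
intros Hx. pose proof (is_lim_seq_psi_num_coef_series x Hx) as Hlim.
apply (is_lim_seq_ext_loc _ (fun _ => psi_num x)) in Hlim.
- apply is_lim_seq_unique in Hlim. rewrite Lim_seq_const in Hlim. injection Hlim. auto.
- exists (Nat.max (length phi) (length eta)). intros K HK.
  unfold psi_num, psi_num_coefs. rewrite rpeval_coef_list.
  apply partial_sum_stable; [|lia]. intros i Hi.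
  rewrite psi_num_coef_eventually_0 by lia. ring.
Qed.

Lemma rpeval_phi_neq_0 y : Rabs y <= 1 -> rpeval phi y <> 0.
Proof.
intros Hy E. assert (Hz : peval phi (RtoC y) = RtoC 0) by (rewrite peval_RtoC, E; reflexivity).
apply phi_roots_outside in Hz. rewrite Cmod_R in Hz. lra.
Qed.

Lemma psi_den_neq_0 x : Rabs x <= 1 -> psi_den x <> 0.
Proof. intros Hx. apply rpeval_phi_neq_0. rewrite Rabs_Ropp. exact Hx. Qed.

Lemma psi_ratio x : Rabs x < 1 -> psi x = psi_num x / psi_den x.
Proof.
intros Hx. rewrite <- psi_den_mul_psi by exact Hx. field. apply psi_den_neq_0. lra.
Qed.

Lemma is_poly_fun_psi_num : is_poly_fun psi_num.
Proof. unfold psi_num. poly_fun_tac. Qed.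

Lemma is_poly_fun_psi_den : is_poly_fun psi_den.
Proof. unfold psi_den. poly_fun_tac. Qed.

Lemma spec_dens_min : exists m, 0 < m /\ forall w, -PI <= w <= PI -> m <= g w.
Proof.
destruct (continuity_ab_min g (-PI) PI) as [w0 [Hmin _]].
- pose proof PI_RGT_0. lra.
- intros w _. apply continuity_spec_dens.
- exists (g w0). split; [apply spec_dens_pos | exact Hmin].
Qed.

(* The Poisson kernel [2 P_x - 1] is positive with integral [2 π]. *)
Lemma psi_lb m x : Rabs x < 1 -> (forall w, -PI <= w <= PI -> m <= g w) ->
  m <= 2 * psi x - autocov 0.
Proof.
intros Hx Hm. pose proof PI_RGT_0. pose proof continuity_spec_dens.
pose proof (continuity_poisson x Hx).
assert (E : 2 * psi x - autocov 0 =
            IntPi (fun w => g w * (2 * poisson x w - 1)) / (2 * PI)).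
{ rewrite (IntPi_ext _ (fun w => 2 * (g w * poisson x w) - g w)) by (intros; ring).
  rewrite IntPi_minus, IntPi_scal, IntPi_spec_dens_poisson, IntPi_spec_dens by continuity_tac.
  field. lra. }
assert (L : IntPi (fun w => m * (2 * poisson x w - 1))
            <= IntPi (fun w => g w * (2 * poisson x w - 1))).
{ apply IntPi_le; [continuity_tac..|]. intros w Hw. rewrite two_poisson_sub_1 by exact Hx.
  apply Rmult_le_compat_r; [|apply Hm; lra].
  apply Rlt_le, Rdiv_lt_0_compat; [|apply poisson_den_pos; exact Hx].
  rewrite <- (pow2_abs x). pose proof (Rabs_pos x). nra. }
rewrite IntPi_scal, IntPi_minus, IntPi_scal, IntPi_poisson, IntPi_const in L
  by (auto || continuity_tac).
rewrite E. apply (Rmult_le_reg_r (2 * PI)); [lra|].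
unfold Rdiv. rewrite Rmult_assoc, Rinv_l; lra.
Qed.

Definition beta1_num (u : R) : R := 2 * psi_num u - autocov 0 * psi_den u.
Definition beta1_den (u : R) : R := (1 - u ^ 2) * psi_den u.

Lemma is_poly_fun_beta1_num : is_poly_fun beta1_num.
Proof.
pose proof is_poly_fun_psi_num. pose proof is_poly_fun_psi_den. unfold beta1_num. poly_fun_tac.
Qed.

Lemma is_poly_fun_beta1_den : is_poly_fun beta1_den.
Proof. pose proof is_poly_fun_psi_den. unfold beta1_den. poly_fun_tac. Qed.

(* On [(0,1)], [|beta1_num x| = |psi_den x| (2 psi x - γ(0)) >= m |psi_den x|]; let [x] tend
   to [1]. *)
Lemma beta1_num_1_neq_0 : beta1_num 1 <> 0.
Proof.
destruct spec_dens_min as [m [Hm Hg]].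
set (h := fun x => Rabs (beta1_num x) - m * Rabs (psi_den x)).
assert (Hh : 0 <= h 1).
{ apply (continuity_pt_ge0_left h 1 0); [lra| |].
  - assert (Hcont : continuity h).
    { pose proof is_poly_fun_beta1_num. pose proof is_poly_fun_psi_den.
      unfold h. continuity_tac; intros x; apply is_poly_fun_continuity_pt; auto. }
    apply Hcont.
  - intros x Hx. assert (Hx' : Rabs x < 1) by (rewrite Rabs_right; lra).
    unfold h. replace (beta1_num x) with (psi_den x * (2 * psi x - autocov 0)).
    + pose proof (psi_lb m x Hx' Hg). rewrite Rabs_mult, (Rabs_right (2 * _ - _)) by lra.
      pose proof (Rabs_pos (psi_den x)). nra.
    + unfold beta1_num. rewrite psi_ratio by exact Hx'. field. apply psi_den_neq_0. lra. }
intros E. unfold h in Hh. rewrite E, Rabs_R0 in Hh.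
assert (Rabs (psi_den 1) > 0) by (apply Rabs_pos_lt, psi_den_neq_0; rewrite Rabs_R1; lra).
nra.
Qed.

Definition f_re_integrand (theta beta w : R) : R :=
  g w * (cos w + beta * theta) / (poisson_den theta w * poisson_den (beta * theta) w).

Lemma continuity_f_re_integrand theta beta : Rabs theta < 1 -> Rabs (beta * theta) < 1 ->
  continuity (f_re_integrand theta beta).
Proof.
intros Ht Ha. pose proof continuity_spec_dens. pose proof (continuity_poisson_den theta).
pose proof (continuity_poisson_den (beta * theta)).
unfold f_re_integrand. continuity_tac.
intros w. pose proof (poisson_den_pos _ w Ht). pose proof (poisson_den_pos _ w Ha). nra.
Qed.

Lemma f_tb_eq_0_IntPi_re theta beta : Rabs theta < 1 -> Rabs (beta * theta) < 1 ->
  f_tb sigma2 eta phi theta beta = RtoC 0 -> IntPi (f_re_integrand theta beta) = 0.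
Proof.
intros Ht Ha Hf.
set (d := fun w => poisson_den theta w * poisson_den (beta * theta) w).
assert (Hd : forall w, 0 < d w).
{ intros w. apply Rmult_lt_0_compat; apply poisson_den_pos; assumption. }
set (im := fun w => g w * sin w / d w).
assert (Him : continuity im).
{ pose proof continuity_spec_dens. pose proof (continuity_poisson_den theta).
  pose proof (continuity_poisson_den (beta * theta)).
  unfold im, d. continuity_tac. intros w. apply Rgt_not_eq, Hd. }
unfold f_tb in Hf.
rewrite (RInt_ext (V := C_R_CompleteNormedModule) _ (fun w => (f_re_integrand theta beta w, im w)))
  in Hf.
- rewrite RInt_C_pair in Hf by auto using continuity_f_re_integrand.
  apply (f_equal fst) in Hf. simpl in Hf. unfold IntPi. lra.
- intros w _. rewrite Cmod_mult, Rpow_mult_distr, !Cmod_1_plus_eiw_sq. fold (d w).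
  specialize (Hd w). unfold f_re_integrand, im, eiw, Cdiv, Cinv, Cmult, Cplus, RtoC. fold (d w).
  simpl. f_equal; field; lra.
Qed.

Lemma IntPi_f_re_integrand theta beta : Rabs theta < 1 -> Rabs (beta * theta) < 1 ->
  theta <> beta * theta -> beta * theta * theta <> 1 ->
  IntPi (f_re_integrand theta beta) =
  2 * PI * ((psi (beta * theta) - psi theta) / (theta - beta * theta)
            + theta * (autocov 0 - psi (beta * theta) - psi theta)
              / (1 - beta * theta * theta)) / (1 - theta ^ 2).
Proof.
intros Ht Ha Hta Hat. set (a := beta * theta) in *.
pose proof continuity_spec_dens. pose proof (continuity_poisson a Ha).
pose proof (continuity_poisson theta Ht). pose proof PI_RGT_0.
assert (theta ^ 2 < 1) by (rewrite <- (pow2_abs theta); pose proof (Rabs_pos theta); nra).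
set (k1 := (/ (theta - a) - theta / (1 - a * theta)) / (1 - theta ^ 2)).
set (k2 := (- / (theta - a) - theta / (1 - a * theta)) / (1 - theta ^ 2)).
set (k3 := theta / (1 - a * theta) / (1 - theta ^ 2)).
rewrite (IntPi_ext _ (fun w => k1 * (g w * poisson a w) + k2 * (g w * poisson theta w) + k3 * g w)).
- rewrite !IntPi_plus, !IntPi_scal, !IntPi_spec_dens_poisson, IntPi_spec_dens by continuity_tac.
  unfold k1, k2, k3. field. repeat split; lra.
- intros w. unfold f_re_integrand. fold a.
  transitivity (g w * ((cos w + a) / (poisson_den theta w * poisson_den a w))); [unfold Rdiv; ring|].
  rewrite poisson_partial_fractions by assumption. unfold k1, k2, k3. field. repeat split; lra.
Qed.

(* [IntPi_f_re_integrand] with [psi = psi_num / psi_den] and the denominators cleared. *)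
Definition f_lt_numerator (beta theta : R) : R :=
  let a := beta * theta in
  (1 - a * theta) * (psi_num a * psi_den theta - psi_num theta * psi_den a) +
  theta * (theta - a) * (autocov 0 * psi_den a * psi_den theta
                         - psi_num a * psi_den theta - psi_num theta * psi_den a).

Lemma is_poly_fun_f_lt_numerator beta : is_poly_fun (f_lt_numerator beta).
Proof.
pose proof is_poly_fun_psi_num. pose proof is_poly_fun_psi_den.
unfold f_lt_numerator. cbv zeta. poly_fun_tac.
Qed.

Lemma f_lt_numerator_at_1 beta : 0 <= beta < 1 -> f_lt_numerator beta 1 <> 0.
Proof.
intros Hb. unfold f_lt_numerator. rewrite !Rmult_1_r.
replace ((1 - beta) * (psi_num beta * psi_den 1 - psi_num 1 * psi_den beta) +
   1 * (1 - beta) * (autocov 0 * psi_den beta * psi_den 1 - psi_num beta * psi_den 1 -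
      psi_num 1 * psi_den beta))
  with (- ((1 - beta) * psi_den beta * beta1_num 1)) by (unfold beta1_num; ring).
apply Ropp_neq_0_compat. repeat apply Rmult_integral_contrapositive_currified.
- lra.
- apply psi_den_neq_0. rewrite Rabs_right; lra.
- apply beta1_num_1_neq_0.
Qed.

Lemma f_tb_eq_0_lt beta theta : 0 <= beta < 1 -> -1 < theta < 1 -> theta <> 0 ->
  f_tb sigma2 eta phi theta beta = RtoC 0 -> f_lt_numerator beta theta = 0.
Proof.
intros Hb Ht Ht0 Hf. pose proof PI_RGT_0.
assert (Ht' : Rabs theta < 1) by (apply Rabs_def1; lra).
assert (Ha : Rabs (beta * theta) < 1).
{ rewrite Rabs_mult, (Rabs_right beta) by lra. pose proof (Rabs_pos theta). nra. }
assert (Hta : theta - beta * theta <> 0).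
{ replace (theta - beta * theta) with ((1 - beta) * theta) by ring.
  apply Rmult_integral_contrapositive_currified; lra. }
assert (Hat : 1 - beta * theta * theta <> 0).
{ assert (Habs : Rabs (beta * theta * theta) < 1).
  { rewrite (Rabs_mult (beta * theta)). pose proof (Rabs_pos (beta * theta)). nra. }
  apply Rabs_def2 in Habs. lra. }
assert (Htt : 1 - theta ^ 2 <> 0) by nra.
apply f_tb_eq_0_IntPi_re in Hf; auto.
rewrite IntPi_f_re_integrand in Hf by lra.
rewrite !psi_ratio in Hf by assumption.
assert (psi_den (beta * theta) <> 0) by (apply psi_den_neq_0; lra).
assert (psi_den theta <> 0) by (apply psi_den_neq_0; lra).
unfold f_lt_numerator. cbv zeta.
match type of Hf with ?E = 0 =>
  transitivity ((1 - theta ^ 2) * (theta - beta * theta) * (1 - beta * theta * theta)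
                * psi_den (beta * theta) * psi_den theta / (2 * PI) * E) end.
- field. repeat split; lra.
- rewrite Hf. ring.
Qed.

Lemma continuity_2d_pt_cos_2 u w : continuity_2d_pt (fun _ v => cos v) u w.
Proof.
apply (continuity_1d_2d_pt_comp cos (fun _ v => v)); [apply continuity_cos | apply continuity_2d_pt_id2].
Qed.

Lemma continuity_2d_pt_poisson_den u w : continuity_2d_pt poisson_den u w.
Proof.
unfold poisson_den.
apply continuity_2d_pt_plus; [apply continuity_2d_pt_plus|].
- apply continuity_2d_pt_const.
- apply continuity_2d_pt_mult; [apply continuity_2d_pt_mult|].
  + apply continuity_2d_pt_const.
  + apply continuity_2d_pt_id1.
  + apply continuity_2d_pt_cos_2.
- apply continuity_2d_pt_mult; [apply continuity_2d_pt_id1|].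
  apply continuity_2d_pt_mult; [apply continuity_2d_pt_id1|apply continuity_2d_pt_const].
Qed.

Lemma continuity_2d_pt_f_re_integrand_1 u w : Rabs u < 1 ->
  continuity_2d_pt (fun u w => f_re_integrand u 1 w) u w.
Proof.
intros Hu. unfold f_re_integrand. pose proof (poisson_den_pos u w Hu).
apply continuity_2d_pt_mult; [apply continuity_2d_pt_mult|].
- apply (continuity_1d_2d_pt_comp g (fun _ v => v)); [apply continuity_spec_dens|].
  apply continuity_2d_pt_id2.
- apply continuity_2d_pt_plus.
  + apply continuity_2d_pt_cos_2.
  + apply continuity_2d_pt_mult; [apply continuity_2d_pt_const|apply continuity_2d_pt_id1].
- apply continuity_2d_pt_inv; [apply continuity_2d_pt_mult|].
  + apply continuity_2d_pt_poisson_den.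
  + apply (continuity_2d_pt_ext (fun u w => poisson_den u w));
      [intros; rewrite Rmult_1_l; reflexivity | apply continuity_2d_pt_poisson_den].
  + rewrite Rmult_1_l. apply Rgt_not_eq, Rmult_lt_0_compat; lra.
Qed.

Definition spec_dens_den_integral (u : R) : R := IntPi (fun w => g w / poisson_den u w).

(* Differentiating [g / |1 + u e^{iw}|^2] in [u] produces the integrand of [f(u, 1)]. *)
Lemma is_derive_spec_dens_den_integral theta : Rabs theta < 1 ->
  is_derive spec_dens_den_integral theta (-2 * IntPi (f_re_integrand theta 1)).
Proof.
intros Ht. set (r := mkposreal (1 - Rabs theta) ltac:(lra)).
assert (Hr : forall u, Rabs (u - theta) < r -> Rabs u < 1).
{ intros u Hu. simpl in Hu. pose proof (Rabs_triang_inv u theta). lra. }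
assert (Hc : forall u, Rabs u < 1 -> continuity (f_re_integrand u 1)).
{ intros u Hu. apply continuity_f_re_integrand; rewrite ?Rmult_1_l; exact Hu. }
rewrite <- IntPi_scal by auto.
apply (is_derive_IntPi_param (fun u w => g w / poisson_den u w)
                             (fun u w => -2 * f_re_integrand u 1 w) theta r).
- intros u w Hu. apply Hr in Hu. pose proof (poisson_den_pos u w Hu).
  unfold f_re_integrand, poisson_den in *. auto_derive; [lra|]. field. lra.
- intros w. apply continuity_2d_pt_mult; [apply continuity_2d_pt_const|].
  apply continuity_2d_pt_f_re_integrand_1, Ht.
- intros u Hu. apply Hr in Hu.
  pose proof continuity_spec_dens. pose proof (continuity_poisson_den u).
  continuity_tac. intros w. apply Rgt_not_eq, poisson_den_pos, Hu.
Qed.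

Lemma spec_dens_den_integral_ratio u : Rabs u < 1 ->
  spec_dens_den_integral u = 2 * PI * (beta1_num u / beta1_den u).
Proof.
intros Hu. pose proof PI_RGT_0.
pose proof continuity_spec_dens. pose proof (continuity_poisson u Hu).
assert (u ^ 2 < 1) by (rewrite <- (pow2_abs u); pose proof (Rabs_pos u); nra).
assert (psi_den u <> 0) by (apply psi_den_neq_0; lra).
unfold spec_dens_den_integral.
rewrite (IntPi_ext _ (fun w => / (1 - u ^ 2) * (2 * (g w * poisson u w) - g w))).
- rewrite IntPi_scal, IntPi_minus, IntPi_scal, IntPi_spec_dens_poisson, IntPi_spec_dens
    by continuity_tac.
  rewrite psi_ratio by exact Hu. unfold beta1_num, beta1_den. field. split; lra.
- intros w. pose proof (two_poisson_sub_1 u w Hu). pose proof (poisson_den_pos u w Hu).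
  transitivity (/ (1 - u ^ 2) * (g w * (2 * poisson u w - 1))); [|ring].
  rewrite two_poisson_sub_1 by exact Hu. field. lra.
Qed.

Lemma beta1_num_den_stationary theta : -1 < theta < 1 ->
  f_tb sigma2 eta phi theta 1 = RtoC 0 ->
  is_derive (fun u => beta1_num u / beta1_den u) theta 0.
Proof.
intros Ht Hf. pose proof PI_RGT_0.
assert (Ht' : Rabs theta < 1) by (apply Rabs_def1; lra).
apply f_tb_eq_0_IntPi_re in Hf; [|exact Ht'|rewrite Rmult_1_l; exact Ht'].
pose proof (is_derive_spec_dens_den_integral theta Ht') as Hd.
rewrite Hf, Rmult_0_r in Hd.
apply (is_derive_scal _ _ (/ (2 * PI))) in Hd. rewrite Rmult_0_r in Hd.
apply is_derive_ext_loc with (2 := Hd).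
exists (mkposreal (1 - Rabs theta) ltac:(lra)). intros u Hu.
change (Rabs (u - theta) < 1 - Rabs theta) in Hu. pose proof (Rabs_triang_inv u theta).
assert (E : / (2 * PI) * spec_dens_den_integral u = beta1_num u / beta1_den u).
{ rewrite spec_dens_den_integral_ratio, <- Rmult_assoc, Rinv_l by lra. ring. }
exact E.
Qed.

Lemma is_derive_beta1_den_1 : is_derive beta1_den 1 (-2 * psi_den 1).
Proof.
destruct (is_poly_fun_derive _ is_poly_fun_psi_den) as [W' [_ dW]].
replace (-2 * psi_den 1) with (-2 * psi_den 1 + (1 - 1 ^ 2) * W' 1) by ring.
apply is_derive_Reals. unfold beta1_den.
apply (derivable_pt_lim_mult (fun u => 1 - u ^ 2) psi_den 1 (-2)).
- apply is_derive_Reals. auto_derive; [exact I | ring].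
- apply is_derive_Reals, dW.
Qed.

Lemma f_tb_1_roots_finite :
  exists l, forall theta, -1 < theta < 1 -> f_tb sigma2 eta phi theta 1 = RtoC 0 -> In theta l.
Proof.
pose proof is_poly_fun_beta1_num as HN. pose proof is_poly_fun_beta1_den as HM.
destruct (is_poly_fun_derive _ HN) as [N' [HN' dN]].
destruct (is_poly_fun_derive _ HM) as [M' [HM' dM]].
set (P := fun u => N' u * beta1_den u - beta1_num u * M' u).
assert (HP : is_poly_fun P) by (unfold P; poly_fun_tac).
(* [beta1_den] has a simple zero at [1], where [beta1_num] does not vanish. *)
assert (HP1 : P 1 <> 0).
{ assert (HM'1 : M' 1 = -2 * psi_den 1).
  { rewrite <- (is_derive_unique _ _ _ (dM 1)). apply is_derive_unique, is_derive_beta1_den_1. }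
  unfold P. rewrite HM'1. unfold beta1_den at 1.
  replace (N' 1 * ((1 - 1 ^ 2) * psi_den 1) - beta1_num 1 * (-2 * psi_den 1))
    with (2 * beta1_num 1 * psi_den 1) by ring.
  repeat apply Rmult_integral_contrapositive_currified; [lra | apply beta1_num_1_neq_0 |].
  apply psi_den_neq_0. rewrite Rabs_R1. lra. }
destruct (is_poly_fun_roots_finite P 1 HP HP1) as [l Hl].
exists l. intros theta Ht Hf. apply Hl.
apply (is_derive_div_eq_0 beta1_num beta1_den); auto using beta1_num_den_stationary.
unfold beta1_den. apply Rmult_integral_contrapositive_currified; [nra|].
apply psi_den_neq_0. apply Rlt_le, Rabs_def1; lra.
Qed.

Lemma f_tb_lt_1_roots_finite beta : 0 <= beta < 1 ->
  exists l, forall theta, -1 < theta < 1 -> f_tb sigma2 eta phi theta beta = RtoC 0 -> In theta l.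
Proof.
intros Hb.
destruct (is_poly_fun_roots_finite _ 1 (is_poly_fun_f_lt_numerator beta)
                                  (f_lt_numerator_at_1 beta Hb)) as [l Hl].
exists (0 :: l). intros theta Ht Hf.
destruct (Req_dec theta 0) as [->|Ht0]; [left; reflexivity|].
right. apply Hl, f_tb_eq_0_lt; assumption.
Qed.

End ARMA.

Theorem proposition4p5 (sigma2 : R) (eta phi : list R) :
  sigma2 > 0 -> invertible_ARMA eta phi ->
  forall beta : R, 0 <= beta <= 1 ->
    exists l : list R, forall theta : R,
      -1 < theta < 1 -> f_tb sigma2 eta phi theta beta = RtoC 0 -> In theta l.
Proof.
intros Hsigma2 HARMA beta Hbeta.
destruct (Req_dec beta 1) as [->|Hbeta1].
- apply f_tb_1_roots_finite; assumption.
- apply f_tb_lt_1_roots_finite; [assumption..|lra].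
Qed.
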